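(* Let $G$ be a finite simple graph on $[d]$ and let ${\bf x}_f,{\bf x}_g$ be monomials of $R[G]$ (associated with $k$-colorings $f,g$ of graphs $G_{\bf a}$, ${\bf a}\in\mathbb{Z}^d_{\ge0}$) such that ${\bf x}_f-{\bf x}_g\in I_G$. Then the following are equivalent: (i) ${\bf x}_f-{\bf x}_g\in M_G$; (ii) both ${\bf x}_f$ and ${\bf x}_g$ belong to $M_G$; (iii) at least one of ${\bf x}_f$ and ${\bf x}_g$ belongs to $M_G$.
   Context: A stable set of $G$ is a subset of $[d]$ with no edge of $G$ (including $\emptyset$ and singletons); $S(G)$ is the set of stable sets; $R[G]=\mathbb{K}[x_S : S\in S(G)]$ over a field $\mathbb{K}$. For ${\bf a}\in\mathbb{Z}_{\ge0}^d$, $G_{\bf a}$ is obtained from $G$ by replacing each vertex $i$ by a clique $G^{(i)}$ on $a_i$ vertices and joining all vertices of $G^{(i)}$ and $G^{(j)}$ when $\{i,j\}\in E(G)$; for a $k$-coloring $f$ of $G_{\bf a}$, ${\bf x}_f=\prod_{\ell=1}^k x_{S_\ell}$ with $S_\ell=\{j : G^{(j)}\cap f^{-1}(\ell)\neq\emptyset\}$ (every monomial of degree $k$ in $R[G]$ arises this way). $I_G$ is the kernel of $\pi:R[G]\to\mathbb{K}[t_1,\dots,t_d,s]$, $\pi(x_S)=s\prod_{j\in S}t_j$. $M_G=\langle x_Sx_T : S,T\in S(G),\ S\cap T\neq\emptyset\rangle$. *)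

From HB Require Import structures.
From mathcomp Require Import all_boot all_algebra.
From mathcomp Require Import mpoly.
Set Implicit Arguments.
Unset Strict Implicit.
Unset Printing Implicit Defensive.
Import GRing.Theory.
Local Open Scope ring_scope.

(* A finite simple graph G on [d] = 'I_d is an edge relation e : rel 'I_d
   (symmetric, irreflexive; these are hypotheses of the theorem). *)

Definition stableb (d : nat) (e : rel 'I_d) (S : {set 'I_d}) : bool :=
  [forall i in S, forall j in S, ~~ e i j].

Definition stable_sets (d : nat) (e : rel 'I_d) : {set {set 'I_d}} :=
  [set S | stableb e S].

Definition nS (d : nat) (e : rel 'I_d) : nat := #|stable_sets e|.

(* The stable set indexing the i-th variable of R[G]:
   variable 'X_i of {mpoly K[nS e]} is x_{stS e i}. *)
Definition stS (d : nat) (e : rel 'I_d) (i : 'I_(nS e)) : {set 'I_d} :=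
  @enum_val _ (mem (stable_sets e)) i.

Notation RG K e := {mpoly K[nS e]}.

(* pi : R[G] -> K[t_1,...,t_d,s], x_S |-> s * prod_{j in S} t_j.
   In {mpoly K[d.+1]}, t_j is 'X_(widen j) and s is 'X_(ord_max). *)
Definition piG (K : fieldType) (d : nat) (e : rel 'I_d) (p : RG K e)
  : {mpoly K[d.+1]} :=
  comp_mpoly
    [tuple 'X_(@ord_max d) * \prod_(j in stS i) 'X_(widen_ord (leqnSn d) j)
     | i < nS e] p.

Definition in_IG (K : fieldType) (d : nat) (e : rel 'I_d) (p : RG K e) : Prop :=
  piG p = 0.

Definition in_ideal (R : comRingType) (n : nat) (gens : seq {mpoly R[n]})
  (p : {mpoly R[n]}) : Prop :=
  exists c : seq {mpoly R[n]}, p = \sum_(i < size gens) c`_i * gens`_i.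

Definition MG_gens (K : fieldType) (d : nat) (e : rel 'I_d) : seq (RG K e) :=
  [seq 'X_p.1 * 'X_p.2
  | p <- enum [pred p : 'I_(nS e) * 'I_(nS e) | stS p.1 :&: stS p.2 != set0]].

Definition in_MG (K : fieldType) (d : nat) (e : rel 'I_d) (p : RG K e) : Prop :=
  in_ideal (MG_gens K e) p.

(* Vertices of G_a: vertex (i, r), r < a_i, is the r-th vertex of the clique G^(i). *)
Definition Ga_vert (d : nat) (a : 'I_d -> nat) : finType := {i : 'I_d & 'I_(a i)}.

Definition Ga_adj (d : nat) (e : rel 'I_d) (a : 'I_d -> nat) (u v : Ga_vert a) : bool :=
  (u != v) && ((tag u == tag v) || e (tag u) (tag v)).

Definition is_coloring (d : nat) (e : rel 'I_d) (a : 'I_d -> nat) (k : nat)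
  (f : {ffun Ga_vert a -> 'I_k}) : bool :=
  [forall u, forall v, Ga_adj e u v ==> (f u != f v)].

Definition color_class (d : nat) (a : 'I_d -> nat) (k : nat)
  (f : {ffun Ga_vert a -> 'I_k}) (l : 'I_k) : {set 'I_d} :=
  [set j : 'I_d | [exists r : 'I_(a j), f (Tagged (fun i => 'I_(a i)) r) == l]].

(* x_f = prod_{l=1}^k x_{S_l}: the exponent of x_S is #{l | S_l = S}. *)
Definition xf (K : fieldType) (d : nat) (e : rel 'I_d) (a : 'I_d -> nat) (k : nat)
  (f : {ffun Ga_vert a -> 'I_k}) : RG K e :=
  \prod_(i < nS e) 'X_i ^+ #|[set l : 'I_k | color_class f l == stS i]|.

From HB Require Import structures.
From mathcomp Require Import all_boot all_algebra.
From mathcomp Require Import mpoly.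
Import GRing.Theory.
Local Open Scope ring_scope.
Set Implicit Arguments.
Unset Strict Implicit.

(* M_G is generated by monomials, so a binomial x^m1 - x^m2 with m1 != m2 lies
   in it iff both monomials do, and x^m lies in it iff some vertex j belongs to
   at least two of the stable sets of x^m, counted with multiplicity.  That
   count is the exponent of t_j in pi(x^m), so monomials with the same image
   under pi, such as x_f and x_g, lie in M_G together. *)

Lemma mpolyX_inj (R : nzRingType) (n : nat) : injective (@mpolyX n R).
Proof. by move=> m1 m2 /(congr1 (@msupp _ _)); rewrite !msuppX => -[]. Qed.

Section Ideal.
Variables (R : comNzRingType) (n : nat) (gens : seq {mpoly R[n]}).

Lemma in_idealB p q : in_ideal gens p -> in_ideal gens q -> in_ideal gens (p - q).
Proof.
move=> [c ->] [c' ->]; exists (mkseq (fun i => c`_i - c'`_i) (size gens)).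
by rewrite -sumrB; apply: eq_bigr => i _; rewrite nth_mkseq // mulrBl.
Qed.

Lemma in_ideal_mull p g : g \in gens -> in_ideal gens (p * g).
Proof.
move=> gin; have lt_g : (index g gens < size gens)%N by rewrite index_mem.
exists (set_nth 0 [::] (index g gens) p).
rewrite (bigD1 (Ordinal lt_g)) ?nth_set_nth //= eqxx nth_index //.
rewrite big1 ?addr0 // => i /eqP ne_i; rewrite nth_set_nth /= nth_nil.
by case: eqP => [eq_i|]; [case: ne_i; apply: val_inj | rewrite mul0r].
Qed.

Hypothesis gensX : {in gens, forall g, exists m, g = 'X_[m]}.

Lemma msupp_in_monomial_ideal p m :
  in_ideal gens p -> m \in msupp p -> exists2 g, 'X_[g] \in gens & (g <= m)%MM.
Proof.
move=> [c ->]; rewrite mcoeff_msupp raddf_sum /=.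
have [i|no_i] := pickP (fun i : 'I_(size gens) => (c`_i * gens`_i)@_m != 0); last first.
  by rewrite big1 ?eqxx // => i _; apply/eqP/negbFE/no_i.
have gin := mem_nth 0 (ltn_ord i); have [g Xg] := gensX gin.
rewrite Xg -mcoeff_msupp (perm_mem (msuppMX _ _)) => /mapP[m' _ ->] _.
by exists g; rewrite -?Xg // lem_addr.
Qed.

Lemma in_monomial_idealXP m :
  in_ideal gens 'X_[m] <-> exists2 g, 'X_[g] \in gens & (g <= m)%MM.
Proof.
split=> [/msupp_in_monomial_ideal | [g gin /submK <-]].
  by apply; rewrite msuppX mem_seq1.
by rewrite mpolyXD; apply: in_ideal_mull.
Qed.

Lemma in_monomial_idealXB m1 m2 : m1 != m2 ->
  in_ideal gens ('X_[m1] - 'X_[m2]) <-> in_ideal gens 'X_[m1] /\ in_ideal gens 'X_[m2].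
Proof.
move=> ne12; split=> [inB | [in1 in2]]; last exact: in_idealB.
have inX m : m \in msupp ('X_[m1] - 'X_[m2] : {mpoly R[n]}) -> in_ideal gens 'X_[m].
  by move=> m_in; apply/in_monomial_idealXP; exact: msupp_in_monomial_ideal inB m_in.
split; apply: inX; rewrite mcoeff_msupp mcoeffB !mcoeffX eqxx.
  by rewrite [m2 == m1]eq_sym (negbTE ne12) subr0 oner_eq0.
by rewrite (negbTE ne12) sub0r oppr_eq0 oner_eq0.
Qed.
End Ideal.

Lemma lem_mnm1D (n : nat) (i1 i2 : 'I_n) (m : 'X_{1..n}) :
  (U_(i1) + U_(i2) <= m)%MM =
  if i1 == i2 then (1 < m i1)%N else (0 < m i1)%N && (0 < m i2)%N.
Proof.
apply/mnm_lepP/idP => [le_m | ].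
  have := le_m i1; have := le_m i2; rewrite !mnmDE !mnm1E !eqxx [i2 == i1]eq_sym.
  by case: eqP => [-> _|_ /= -> ->].
move=> h i; rewrite mnmDE !mnm1E; case: eqVneq h => [<- h|ne /andP[h1 h2]].
  by case: eqP => [<-|].
by case: eqP => [?|_]; case: eqP => [?|_]; subst; rewrite ?eqxx ?addn0 ?add0n in ne *.
Qed.

Lemma sum_nat_gt0P (I : finType) (P : pred I) (F : I -> nat) :
  reflect (exists2 i, P i & 0 < F i)%N (0 < \sum_(i | P i) F i)%N.
Proof.
apply: (iffP idP) => [|[i Pi Fi]]; last by rewrite (bigD1 i) //= ltn_addr.
by rewrite lt0n sum_nat_eq0 => /forall_inPn[i Pi]; rewrite -lt0n; exists i.
Qed.

Section Covering.
Variables (n : nat) (T : finType) (S : 'I_n -> {set T}).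

Definition cover_count (m : 'X_{1..n}) (t : T) : nat := \sum_(i | t \in S i) m i.

Lemma overlapping_pairP m :
  (exists i1 i2, S i1 :&: S i2 != set0 /\ (U_(i1) + U_(i2) <= m)%MM) <->
  (exists t, 1 < cover_count m t)%N.
Proof.
split=> [[i1 [i2 [/set0Pn[t /setIP[t1 t2]] le_m]]] | [t cnt2]].
  rewrite lem_mnm1D in le_m; exists t; rewrite /cover_count (bigD1 i1) //=.
  case: (eqVneq i1 i2) le_m => [_ m1 | ne /andP[m1 m2]].
    by rewrite (leq_trans m1) ?leq_addr.
  rewrite (bigD1 i2) /=; last by rewrite t2 eq_sym.
  by rewrite addnA (leq_trans (leq_add m1 m2)) ?leq_addr.
have [i1 t1 m1] : exists2 i1, t \in S i1 & (0 < m i1)%N by apply/sum_nat_gt0P/ltnW.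
have meet i : t \in S i -> S i1 :&: S i != set0.
  by move=> ti; apply/set0Pn; exists t; rewrite inE t1.
have [m1_gt1 | m1_le1] := ltnP 1 (m i1).
  by exists i1, i1; rewrite lem_mnm1D eqxx meet.
have m1_eq1 : m i1 = 1%N by apply/eqP; rewrite eqn_leq m1_le1.
move: cnt2; rewrite /cover_count (bigD1 i1) //= m1_eq1 add1n ltnS.
move=> /sum_nat_gt0P[i2 /andP[t2 ne] m2].
by exists i1, i2; rewrite lem_mnm1D [i1 == i2]eq_sym (negbTE ne) m1 m2 meet.
Qed.
End Covering.

Section StableSetRing.
Variables (K : fieldType) (d : nat) (e : rel 'I_d).
Local Notation n := (nS e).
Local Notation t_ j := (widen_ord (leqnSn d) j).

Definition coloring_mnm (a : 'I_d -> nat) (k : nat) (f : {ffun Ga_vert a -> 'I_k}) :=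
  [multinom #|[set l : 'I_k | color_class f l == stS i]| | i < n].

Lemma xf_mpolyX a k (f : {ffun Ga_vert a -> 'I_k}) : xf K e f = 'X_[coloring_mnm f].
Proof. by rewrite /xf mpolyXE_id; apply: eq_bigr => i _; rewrite mnmE. Qed.

Definition pi_mnm (m : 'X_{1..n}) : 'X_{1..d.+1} :=
  (\sum_(i < n) (U_(ord_max) + \sum_(j in stS i) U_(t_ j)) *+ m i)%MM.

Lemma piG_mpolyX m : piG ('X_[m] : RG K e) = 'X_[pi_mnm m].
Proof.
rewrite /piG comp_mpolyX /pi_mnm -mprodXnE; apply: eq_bigr => i _.
by rewrite tnth_mktuple mpolyXD -mprodXE.
Qed.

Lemma pi_mnm_t m j : pi_mnm m (t_ j) = cover_count (@stS d e) m j.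
Proof.
rewrite mnm_sumE /cover_count [RHS]big_mkcond /=; apply: eq_bigr => i _.
rewrite mulmnE mnmDE mnm_sumE mnm1E.
have -> : (ord_max == t_ j) = false by rewrite -val_eqE /= gtn_eqF.
have t_eq j' : (t_ j' == t_ j) = (j' == j) by rewrite -val_eqE.
rewrite add0n; case: ifP => ji; last first.
  by rewrite big1 // => j' j'i; rewrite mnm1E t_eq; case: eqP j'i => // ->; rewrite ji.
rewrite (bigD1 j) //= mnm1E eqxx big1 ?addn0 ?mul1n // => j' /andP[_ ne].
by rewrite mnm1E t_eq (negbTE ne).
Qed.

Lemma in_IGB (p q : RG K e) : in_IG (p - q) <-> piG p = piG q.
Proof.
rewrite /in_IG /piG comp_mpolyB; split=> [/eqP | ->]; last exact: subrr.
by rewrite subr_eq0 => /eqP.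
Qed.

Lemma mem_MG_gensX g : 'X_[g] \in MG_gens K e <->
  exists i1 i2, stS i1 :&: stS i2 != set0 /\ g = (U_(i1) + U_(i2))%MM.
Proof.
split=> [/mapP[[i1 i2]] | [i1 [i2 [meet ->]]]]; last first.
  by rewrite mpolyXD; apply/mapP; exists (i1, i2); rewrite ?mem_enum.
by rewrite mem_enum -mpolyXD => meet /mpolyX_inj ->; exists i1, i2.
Qed.

Lemma MG_gens_monomial : {in MG_gens K e, forall q, exists m, q = 'X_[m]}.
Proof. by move=> _ /mapP[[i1 i2] _ ->]; exists (U_(i1) + U_(i2))%MM; rewrite mpolyXD. Qed.

Lemma in_MG_mpolyXP m :
  in_MG ('X_[m] : RG K e) <-> exists j, (1 < cover_count (@stS d e) m j)%N.
Proof.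
rewrite /in_MG in_monomial_idealXP -?overlapping_pairP; last exact: MG_gens_monomial.
split=> [[g /mem_MG_gensX[i1 [i2 [meet ->]]] le_m] | [i1 [i2 [meet le_m]]]].
  by exists i1, i2.
by exists (U_(i1) + U_(i2))%MM; first by apply/mem_MG_gensX; exists i1, i2.
Qed.

Lemma in_MG_piG m1 m2 : piG ('X_[m1] : RG K e) = piG 'X_[m2] ->
  in_MG ('X_[m1] : RG K e) <-> in_MG ('X_[m2] : RG K e).
Proof.
rewrite !piG_mpolyX => /mpolyX_inj pi12; rewrite !in_MG_mpolyXP.
have cover12 : cover_count (@stS d e) m1 =1 cover_count (@stS d e) m2.
  by move=> j; rewrite -!pi_mnm_t pi12.
by split=> -[j]; exists j; rewrite ?cover12 // -cover12.
Qed.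
End StableSetRing.

Unset Implicit Arguments.

Theorem lemma6p3 (K : fieldType) (d : nat) (e : rel 'I_d)
  (e_sym : ssrbool.symmetric e) (e_irr : irreflexive e)
  (a : 'I_d -> nat) (k : nat) (f : {ffun Ga_vert a -> 'I_k})
  (b : 'I_d -> nat) (k' : nat) (g : {ffun Ga_vert b -> 'I_k'})
  (hf : is_coloring e f) (hg : is_coloring e g)
  (hne : xf K e f != xf K e g)
  (hI : in_IG (xf K e f - xf K e g)) :
  (in_MG (xf K e f - xf K e g) <-> in_MG (xf K e f) /\ in_MG (xf K e g)) /\
  (in_MG (xf K e f) /\ in_MG (xf K e g) <-> in_MG (xf K e f) \/ in_MG (xf K e g)).
Proof.
rewrite !xf_mpolyX in hne hI *; move/in_IGB/in_MG_piG: hI => MG_fg.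
have ne_fg : coloring_mnm e f != coloring_mnm e g by apply: contraNneq hne => ->.
split; last by rewrite MG_fg; tauto.
by apply: in_monomial_idealXB ne_fg; exact: MG_gens_monomial.
Qed.
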